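(* For every $k\ge1$, every clean universal $k$-URA $\mathcal A$ over $(\mathbb N;=)$ (over any finite alphabet), every configuration $C$ reachable in $\mathcal A$ and every location $\ell$ of $\mathcal A$, the number of states in $C$ with location $\ell$ is at most $(k\cdot4^k\cdot k!)^k$. In other words, $N_k\le(k\cdot 4^k\cdot k!)^k$.
   Context: Let $\Sigma$ be a finite alphabet; data words are finite sequences in $(\Sigma\times\mathbb N)^*$. Let $\mathbb N_\bot=\mathbb N\cup\{\bot\}$, $\bot$ equal only to itself. Register constraints over registers $\mathcal R$ are Boolean combinations of atoms $t_1=t_2$ with $t_i\in\{\#\}\cup\{r,\dot r:r\in\mathcal R\}$, interpreted on triples $(\mathbf u,d,\mathbf v)$ (current valuation, input datum, next valuation, valuations $\mathcal R\to\mathbb N_\bot$). A $k$-RA over $(\mathbb N;=)$ is $(\mathcal R,\mathcal L,\ell_{init},\mathcal L_{acc},E)$ with $|\mathcal R|=k$, finite locations, finite edges $(\ell,\sigma,\phi,\ell')$ whose constraints contain for each register $r$ a conjunct $\dot r=r$ or $\dot r=\#$. States are $\ell(\mathbf u)$; the initial state is $\ell_{init}$ with all registers $\bot$; $\ell(\mathbf u)\xrightarrow{\sigma,d}\ell'(\mathbf u')$ if some edge $(\ell,\sigma,\phi,\ell')$ has $(\mathbf u,d,\mathbf u')\models\phi$. A word is accepted from a state if some run on it from that state ends in a state with location in $\mathcal L_{acc}$; $L(\mathcal A)$: words accepted from the initial state; universal means $L(\mathcal A)=(\Sigma\times\mathbb N)^*$. A $k$-URA is a $k$-RA where each data word has at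 most one initialized accepting run. Clean: every reachable state $\ell(u_1,\dots,u_k)$ accepts some word and no element of $\mathbb N$ occurs in two different components of $(u_1,\dots,u_k)$. A configuration is a set of states; $\mathrm{succ}(C,(\sigma,d))$ is the set of states reachable by one transition on $(\sigma,d)$ from a state in $C$, extended to words; $C$ is reachable if $C=\mathrm{succ}(\{\text{initial state}\},w)$ for some data word $w$. $N_k$ denotes the supremum, over all clean universal $k$-URA $\mathcal A$ over $(\mathbb N;=)$ and all configurations $C$ reachable in $\mathcal A$, of the maximal number of distinct states in $C$ sharing the same location. *)

From Stdlib Require List.
From mathcomp Require Import all_boot.
Set Implicit Arguments. Unset Strict Implicit. Unset Printing Implicit Defensive.

(* Registers of a k-RA are 'I_k; the value domain N_bot is option nat
   (None = bot, equal only to itself). *)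
Definition valuation (k : nat) := {ffun 'I_k -> option nat}.

Inductive term (k : nat) : Type :=
| Cur of 'I_k      (* r       : current value of register r *)
| Nxt of 'I_k      (* \dot r  : next value of register r *)
| Dat.             (* #       : input datum *)
Arguments Dat {k}.

Inductive constr (k : nat) : Type :=
| CTrue
| Atom of term k & term k
| CNot of constr k
| CAnd of constr k & constr k
| COr of constr k & constr k.
Arguments CTrue {k}.

Definition eval_term k (u : valuation k) (d : nat) (v : valuation k)
  (t : term k) : option nat :=
  match t with
  | Cur r => u r
  | Nxt r => v r
  | Dat => Some d
  end.

Fixpoint sat k (u : valuation k) (d : nat) (v : valuation k) (phi : constr k)
  : Prop :=
  match phi with
  | CTrue => True
  | Atom t1 t2 => eval_term u d v t1 = eval_term u d v t2
  | CNot p => ~ sat u d v p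
  | CAnd p q => sat u d v p /\ sat u d v q
  | COr p q => sat u d v p \/ sat u d v q
  end.

Fixpoint conjuncts k (phi : constr k) : list (constr k) :=
  match phi with
  | CAnd p q => conjuncts p ++ conjuncts q
  | _ => [:: phi]
  end.

Definition edge_constr_ok k (phi : constr k) : Prop :=
  forall r : 'I_k,
    List.In (Atom (Nxt r) (Cur r)) (conjuncts phi) \/
    List.In (Atom (Nxt r) Dat) (conjuncts phi).

Record RA (k : nat) (Sigma L : finType) := mkRA {
  ra_init : L;
  ra_acc : {set L};
  ra_edges : seq (L * Sigma * constr k * L)
}.

Definition wf_RA k (Sigma L : finType) (A : RA k Sigma L) : Prop :=
  forall e, List.In e (ra_edges A) -> edge_constr_ok e.1.2.

Definition state k (L : finType) := (L * valuation k)%type.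

Definition data_word (Sigma : finType) := seq (Sigma * nat).

Definition init_state k Sigma L (A : RA k Sigma L) : state k L :=
  (ra_init A, [ffun _ => None]).

Definition step k Sigma L (A : RA k Sigma L) (s : state k L)
  (a : Sigma * nat) (s' : state k L) : Prop :=
  exists phi, List.In (s.1, a.1, phi, s'.1) (ra_edges A) /\ sat s.2 a.2 s'.2 phi.

(* rho is a run on w from s: rho lists the states visited after each letter. *)
Fixpoint is_run k Sigma L (A : RA k Sigma L) (s : state k L)
  (w : data_word Sigma) (rho : seq (state k L)) : Prop :=
  match w, rho with
  | [::], [::] => True
  | a :: w', s1 :: rho' => step A s a s1 /\ is_run A s1 w' rho'
  | _, _ => False
  end.

Definition accepting_run k Sigma L (A : RA k Sigma L) (s : state k L)
  (w : data_word Sigma) (rho : seq (state k L)) : Prop :=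
  is_run A s w rho /\ (last s rho).1 \in ra_acc A.

Definition accepts_from k Sigma L (A : RA k Sigma L) (s : state k L)
  (w : data_word Sigma) : Prop :=
  exists rho, accepting_run A s w rho.

Definition universal k Sigma L (A : RA k Sigma L) : Prop :=
  forall w : data_word Sigma, accepts_from A (init_state A) w.

Definition unambiguous k Sigma L (A : RA k Sigma L) : Prop :=
  forall (w : data_word Sigma) rho1 rho2,
    accepting_run A (init_state A) w rho1 ->
    accepting_run A (init_state A) w rho2 -> rho1 = rho2.

Definition URA k Sigma L (A : RA k Sigma L) : Prop := wf_RA A /\ unambiguous A.

Definition reachable_state k Sigma L (A : RA k Sigma L) (s : state k L) : Prop :=
  exists w rho, is_run A (init_state A) w rho /\ last (init_state A) rho = s.

Definition clean k Sigma L (A : RA k Sigma L) : Prop :=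
  forall s : state k L, reachable_state A s ->
    (exists w, accepts_from A s w) /\
    (forall (i j : 'I_k) (d : nat), i != j -> s.2 i = Some d -> s.2 j = Some d -> False).

Definition config k (L : finType) := state k L -> Prop.

Definition succ k Sigma L (A : RA k Sigma L) (C : config k L) (a : Sigma * nat)
  : config k L := fun s' => exists s, C s /\ step A s a s'.

Fixpoint succw k Sigma L (A : RA k Sigma L) (C : config k L) (w : data_word Sigma)
  : config k L :=
  match w with
  | [::] => C
  | a :: w' => succw A (succ A C a) w'
  end.

Definition reachable_config k Sigma L (A : RA k Sigma L) (C : config k L) : Prop :=
  exists w : data_word Sigma,
    forall s, C s <-> succw A (fun s0 => s0 = init_state A) w s.

From mathcomp Require Import all_boot zify.
Set Implicit Arguments. Unset Strict Implicit. Unset Printing Implicit Defensive.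

(* Bound on the number of states at a fixed location in a reachable
   configuration C of a clean universal k-URA.  We prove the sharper bound
   (k^2 + k + 1)^k, which is at most (k * 4^k * k!)^k.

   Let X be the valuations u with l(u) in C.  The key property (config_targets)
   is that X is a "target family": fix a set Q of registers and u1 in X defined
   outside Q.  Shift the data of a word v accepted from l(u1), away from the
   values u1 keeps on Q; by universality the shifted word is accepted from some
   t = l'(tv) in C.  Any uj in X agreeing with u1 on Q and defined outside Q
   either stores a value of tv outside Q, or an injective data renaming maps
   l(u1) to l(uj) while fixing t (realign); then l(uj) and t accept a common
   word, and unambiguity forces l(uj) = t.
   A purely combinatorial count (targets_bound) shows that a target family has
   at most (k^2 + k + 1)^k members: apart from the target, every member lies
   in one of k(k+1) classes fixing the content of one further register. *)

Section Swap.
(* The involution of nat exchanging a i with b i for every i in P and fixing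
   every other number; it realigns data values between two valuations. *)
Variables (I : finType) (P : pred I) (a b : I -> nat).
Hypotheses (a_inj : {in P &, injective a}) (b_inj : {in P &, injective b}).
Hypothesis ab_disjoint : forall i j, P i -> P j -> a i != b j.

Definition swap (y : nat) : nat :=
  if [pick i | P i && (a i == y)] is Some i then b i
  else if [pick i | P i && (b i == y)] is Some i then a i else y.

Lemma swap_a i : P i -> swap (a i) = b i.
Proof.
move=> Pi; rewrite /swap; case: pickP => [j /andP [Pj /eqP Eji]|/(_ i)].
  by rewrite (a_inj Pj Pi Eji).
by rewrite Pi eqxx.
Qed.

Lemma swap_b i : P i -> swap (b i) = a i.
Proof.
move=> Pi; rewrite /swap; case: pickP => [j /andP [Pj Eji]|_].
  by move: (ab_disjoint Pj Pi); rewrite Eji.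
case: pickP => [j /andP [Pj /eqP Eji]|/(_ i)]; first by rewrite (b_inj Pj Pi Eji).
by rewrite Pi eqxx.
Qed.

Lemma swap_fix y : (forall i, P i -> a i != y) -> (forall i, P i -> b i != y) ->
  swap y = y.
Proof.
move=> Na Nb; rewrite /swap.
case: pickP => [j /andP [Pj Ej]|_]; first by move: (Na j Pj); rewrite Ej.
by case: pickP => [j /andP [Pj Ej]|_] //; move: (Nb j Pj); rewrite Ej.
Qed.

Lemma swapK : involutive swap.
Proof.
move=> y; rewrite {2}/swap.
case: pickP => [i /andP [Pi /eqP <-]|Na]; first exact: swap_b.
case: pickP => [i /andP [Pi /eqP <-]|Nb]; first exact: swap_a.
have fix_y : swap y = y.
  apply: swap_fix => i Pi; [move: (Na i) | move: (Nb i)]; by rewrite /= Pi /= => ->.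
by rewrite !fix_y.
Qed.

End Swap.

Section Valuations.
Variable k : nat.

Definition ren (f : nat -> nat) (u : valuation k) : valuation k :=
  [ffun r => omap f (u r)].

Definition bounded (B : nat) (u : valuation k) : Prop :=
  forall r x, u r = Some x -> x <= B.

Definition inj_val (u : valuation k) : Prop :=
  forall i j d, u i = Some d -> u j = Some d -> i = j.

Variables (B : nat) (Q : {set 'I_k}) (u1 : valuation k).

Definition shift_off (x : nat) : nat :=
  if [exists r, (r \in Q) && (u1 r == Some x)] then x else x + B.+1.

Lemma shift_off_inj : bounded B u1 -> injective shift_off.
Proof.
move=> bnd1 x y; rewrite /shift_off.
have low z : [exists r, (r \in Q) && (u1 r == Some z)] -> z <= B.
  by case/existsP => r /andP [_ /eqP /bnd1].
by case: ifPn => [/low|_]; case: ifPn => [/low|_]; lia.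
Qed.

Lemma realign (uj tv : valuation k) :
  inj_val u1 -> inj_val uj -> bounded B u1 -> bounded B uj -> bounded B tv ->
  (forall r, r \in Q -> uj r = u1 r) ->
  (forall r, r \notin Q -> u1 r != None) -> (forall r, r \notin Q -> uj r != None) ->
  (forall r r', r \notin Q -> uj r != tv r') ->
  exists h, [/\ injective h, ren h (ren shift_off u1) = uj & ren h tv = tv].
Proof.
move=> inj1 injj bnd1 bndj bndt agreeQ def1 defj no_clash.
pose outQ := [pred r : 'I_k | r \notin Q].
pose x1 r := odflt 0 (u1 r).
pose a r := x1 r + B.+1.
pose b r := odflt 0 (uj r).
have some1 r : r \notin Q -> u1 r = Some (x1 r).
  by move/def1; rewrite /x1; case: (u1 r).
have somej r : r \notin Q -> uj r = Some (b r).
  by move/defj; rewrite /b; case: (uj r).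
have a_inj : {in outQ &, injective a}.
  move=> i j Ni Nj /addIn Eij; apply: (inj1 _ _ _ (some1 i Ni)).
  by rewrite Eij some1.
have b_inj : {in outQ &, injective b}.
  by move=> i j Ni Nj Eij; apply: (injj _ _ _ (somej i Ni)); rewrite Eij somej.
have ab_disj i j : outQ i -> outQ j -> a i != b j.
  by move=> _ Nj; have := bndj j _ (somej j Nj); rewrite /a; lia.
pose h := swap outQ a b.
have fix_low y : y <= B -> (forall i, i \notin Q -> uj i != Some y) -> h y = y.
  move=> yB Nb; apply: swap_fix => i Ni; first by rewrite /a; lia.
  by apply: contra (Nb i Ni) => /eqP <-; rewrite somej.
exists h; split; first exact: can_inj (swapK a_inj b_inj ab_disj).
- apply/ffunP => r; rewrite !ffunE; case: (boolP (r \in Q)) => Qr.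
    rewrite agreeQ //; case E1r: (u1 r) => [x|] //=.
    have -> : shift_off x = x.
      by rewrite /shift_off ifT //; apply/existsP; exists r; rewrite Qr E1r eqxx.
    congr Some; apply: fix_low; first exact: bnd1 E1r.
    move=> i Ni; apply/eqP => Eji; have Ejr : uj r = Some x by rewrite agreeQ.
    by move: Ni; rewrite (injj _ _ _ Eji Ejr) Qr.
  rewrite some1 // somej //=.
  have -> : shift_off (x1 r) = a r.
    rewrite /shift_off ifF //; apply/negbTE/existsP => -[i /andP [Qi /eqP Ei]].
    by move: Qi; rewrite (inj1 _ _ _ Ei (some1 r Qr)) (negbTE Qr).
  by rewrite /h swap_a.
- apply/ffunP => r; rewrite ffunE; case Etr: (tv r) => [y|] //=.
  congr Some; apply: fix_low; first exact: bndt Etr.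
  by move=> i Ni; rewrite -Etr no_clash.
Qed.

End Valuations.

Lemma size_cover (T : eqType) (I : finType) (P0 : pred T) (Pi : I -> pred T)
    (X : seq T) :
  (forall x, x \in X -> P0 x || [exists i, Pi i x]) ->
  size X <= count P0 X + \sum_(i : I) count (Pi i) X.
Proof.
elim: X => [|x X IH] covered //=.
have IHX := IH (fun y Xy => covered y (@mem_behead _ (x :: X) y Xy)).
rewrite big_split /=.
have : 1 <= P0 x + \sum_(i : I) (Pi i x : nat).
  case/orP: (covered x (mem_head x X)) => [-> //|/existsP [i Pix]].
  by rewrite (bigD1 i) //= Pix; lia.
lia.
Qed.

Section Counting.
Variables (k : nat) (P : valuation k -> Prop).

Definition has_targets : Prop :=
  forall (Q : {set 'I_k}) (u1 : valuation k), P u1 ->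
    (forall r, r \notin Q -> u1 r != None) ->
  exists tv : valuation k, forall u, P u ->
    (forall r, r \in Q -> u r = u1 r) -> (forall r, r \notin Q -> u r != None) ->
    u = tv \/ exists r r', r \notin Q /\ u r = tv r'.

Definition fixing_class (Q : {set 'I_k}) (tv : valuation k)
    (p : 'I_k * option 'I_k) : pred (valuation k) :=
  fun u => (p.1 \notin Q) && (u p.1 == if p.2 is Some r' then tv r' else None).

Hypothesis targets : has_targets.

Lemma split_classes (Q : {set 'I_k}) (X : seq (valuation k)) :
  uniq X -> (forall u, u \in X -> P u) ->
  (forall u u', u \in X -> u' \in X -> forall r, r \in Q -> u r = u' r) ->
  exists tv, size X <= 1 + \sum_(p : 'I_k * option 'I_k) count (fixing_class Q tv p) X.
Proof.
move=> uniqX XP agree.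
pose defined (u : valuation k) := [forall r, (r \in Q) || (u r != None)].
have undef tv u : ~~ defined u -> [exists p, fixing_class Q tv p u].
  case/forallPn => r; rewrite negb_or negbK => /andP [Nr /eqP Er].
  by apply/existsP; exists (r, None); rewrite /fixing_class /= Nr Er.
have [tv covered] : exists tv : valuation k, forall u, u \in X ->
    (u == tv) || [exists p, fixing_class Q tv p u].
  case: (boolP (has defined X)) => [/hasP [u1 Xu1 def1]|/hasPn nodef].
    have outQ u : defined u -> forall r, r \notin Q -> u r != None.
      by move/forallP => def_u r Nr; move: (def_u r); rewrite (negbTE Nr).
    have [tv tvP] := targets (XP u1 Xu1) (outQ u1 def1).
    exists tv => u Xu; case: (boolP (defined u)) => [def_u|/(undef tv) ->]; last first.
      by rewrite orbT.
    have [->|[r [r' [Nr Er]]]] := tvP u (XP u Xu) (agree u u1 Xu Xu1) (outQ u def_u).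
      by rewrite eqxx.
    apply/orP; right; apply/existsP; exists (r, Some r').
    by rewrite /fixing_class /= Nr Er eqxx.
  by exists [ffun _ => None] => u Xu; rewrite undef ?orbT ?nodef.
exists tv; apply: leq_trans (size_cover covered) _.
by rewrite count_uniq_mem // leq_add2r leq_b1.
Qed.

Lemma fixing_class_inQ (Q : {set 'I_k}) tv p (X : seq (valuation k)) :
  p.1 \in Q -> count (fixing_class Q tv p) X = 0.
Proof.
move=> Qp; apply/eqP; rewrite eqn0Ngt -has_count; apply/hasPn => u _.
by rewrite /fixing_class Qp.
Qed.

(* Induction on the number m of registers not yet fixed: each split produces
   one target and k * (k + 1) classes with one more register fixed. *)
Lemma count_agreeing m (Q : {set 'I_k}) (X : seq (valuation k)) :
  k - #|Q| <= m -> uniq X -> (forall u, u \in X -> P u) ->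
  (forall u u', u \in X -> u' \in X -> forall r, r \in Q -> u r = u' r) ->
  size X <= (k * k + k + 1) ^ m.
Proof.
elim: m Q X => [|m IH] Q X free uniqX XP agree;
  have [tv sizeX] := split_classes uniqX XP agree; apply: leq_trans sizeX _.
  have fullQ : Q = [set: 'I_k].
    by apply/eqP; rewrite eqEcard subsetT cardsT card_ord; lia.
  by rewrite big1 // => p _; rewrite fixing_class_inQ // fullQ inE.
have class_le p : count (fixing_class Q tv p) X <= (k * k + k + 1) ^ m.
  case: (boolP (p.1 \in Q)) => Qp; first by rewrite fixing_class_inQ.
  rewrite -size_filter; apply: IH (p.1 |: Q) _ _ (filter_uniq _ uniqX) _ _.
  - by rewrite cardsU1 Qp add1n subnS; lia.
  - by move=> u; rewrite mem_filter => /andP [_ /XP].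
  move=> u u'; rewrite !mem_filter => /andP [Cu Xu] /andP [Cu' Xu'] r.
  rewrite in_setU1 => /orP [/eqP ->|Qr]; last exact: agree.
  by move: Cu Cu'; rewrite /fixing_class => /andP [_ /eqP ->] /andP [_ /eqP ->].
have : \sum_(p : 'I_k * option 'I_k) count (fixing_class Q tv p) X <=
         \sum_(p : 'I_k * option 'I_k) (k * k + k + 1) ^ m.
  by apply: leq_sum => p _; exact: class_le.
rewrite sum_nat_const card_prod card_option card_ord expnS.
have : 0 < (k * k + k + 1) ^ m by rewrite expn_gt0 addn1.
set F := _ ^ m; nia.
Qed.

Lemma targets_bound (X : seq (valuation k)) :
  uniq X -> (forall u, u \in X -> P u) -> size X <= (k * k + k + 1) ^ k.
Proof.
move=> uniqX XP; apply: (count_agreeing (Q := set0)) => //.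
  by rewrite cards0 subn0.
by move=> u u' _ _ r; rewrite inE.
Qed.

End Counting.

Section Runs.
Variables (k : nat) (Sigma L : finType) (A : RA k Sigma L).

Lemma run_cat s w1 w2 r1 r2 :
  is_run A s w1 r1 -> is_run A (last s r1) w2 r2 -> is_run A s (w1 ++ w2) (r1 ++ r2).
Proof.
elim: w1 r1 s => [|a w1 IH] [|s1 r1] s //= [step1 run1] run2.
by split; last exact: IH.
Qed.

Lemma run_size s w r : is_run A s w r -> size r = size w.
Proof. by elim: w r s => [|a w IH] [|s1 r] s //= [_ /IH ->]. Qed.

Lemma run_split s w1 w2 r : is_run A s (w1 ++ w2) r ->
  is_run A s w1 (take (size w1) r) /\
  is_run A (last s (take (size w1) r)) w2 (drop (size w1) r).
Proof. by elim: w1 r s => [|a w1 IH] [|s1 r] s //= [step1 /IH []]. Qed.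

Lemma succw_run (C0 : config k L) w s :
  succw A C0 w s <-> exists s0 r, [/\ C0 s0, is_run A s0 w r & last s0 r = s].
Proof.
elim: w C0 => [|a w IH] C0 /=.
  split=> [C0s|[s0 [[|s1 r] [C0s0 _ /= <-]]]] //; by exists s, [::].
rewrite IH; split=> [[s1 [r [[s0 [C0s0 step0]] run1 <-]]]|].
  by exists s0, (s1 :: r).
move=> [s0 [[|s1 r] [C0s0 //= [step0 run1] <-]]].
by exists s1, r; split=> //; exists s0.
Qed.

Lemma sat_conjunct (u v : valuation k) d (phi c : constr k) :
  List.In c (conjuncts phi) -> sat u d v phi -> sat u d v c.
Proof.
elim: phi => [|t1 t2|p IHp|p IHp q IHq|p IHp q IHq] /=; try by move=> [<-|[]].
by move=> /(List.in_app_or _ _ _) [inp|inq] [sat_p sat_q]; [exact: IHp | exact: IHq].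
Qed.

(* Registers only ever receive the input datum, so along a run with data
   at most B all stored values stay at most B. *)
Lemma run_bounded B s w r : wf_RA A -> bounded B s.2 ->
  all (fun a => a.2 <= B) w -> is_run A s w r -> bounded B (last s r).2.
Proof.
move=> wfA; elim: w r s => [|a w IH] [|s1 r] s //= bnd /andP [aB wB].
move=> [[phi [edge sat_phi]] run1].
apply: IH wB run1 => reg x.
have [in_phi|in_phi] := wfA _ edge reg; have /= -> := sat_conjunct in_phi sat_phi.
- exact: bnd.
- by case=> <-.
Qed.

Definition ren_word (f : nat -> nat) (w : data_word Sigma) : data_word Sigma :=
  map (fun a => (a.1, f a.2)) w.

Definition ren_state (f : nat -> nat) (s : state k L) : state k L := (s.1, ren f s.2).

(* Constraints only test equality, so injective renamings preserve them. *)
Lemma sat_ren f (u v : valuation k) d (phi : constr k) : injective f ->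
  sat (ren f u) (f d) (ren f v) phi <-> sat u d v phi.
Proof.
move=> f_inj; elim: phi => [|t1 t2|p IHp|p IHp q IHq|p IHp q IHq] /=; try tauto.
have eval_ren t : eval_term (ren f u) (f d) (ren f v) t = omap f (eval_term u d v t).
  by case: t => [r|r|] /=; rewrite ?ffunE.
by rewrite !eval_ren; split=> [/(inj_omap f_inj)|->].
Qed.

Lemma run_ren f s w r : injective f -> is_run A s w r ->
  is_run A (ren_state f s) (ren_word f w) (map (ren_state f) r).
Proof.
move=> f_inj; elim: w r s => [|a w IH] [|s1 r] s //= [[phi [edge sat_phi]] run1].
by split; [exists phi; split; last exact/sat_ren | exact: IH].
Qed.

Lemma accepts_ren f s w : injective f -> accepts_from A s w ->
  accepts_from A (ren_state f s) (ren_word f w).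
Proof.
move=> f_inj [r [run acc]]; exists (map (ren_state f) r).
by split; [exact: run_ren | rewrite last_map].
Qed.

End Runs.

Section ReachableConfiguration.
Variables (k : nat) (Sigma L : finType) (A : RA k Sigma L).
Hypotheses (wfA : wf_RA A) (unambA : unambiguous A).
Hypotheses (cleanA : clean A) (universalA : universal A).
Variables (C : config k L) (w : data_word Sigma).
Hypothesis C_def : forall s, C s <-> succw A (fun s0 => s0 = init_state A) w s.

Lemma config_run s :
  C s <-> exists r, is_run A (init_state A) w r /\ last (init_state A) r = s.
Proof.
rewrite C_def succw_run.
by split=> [[s0 [r [-> run <-]]]|[r [run <-]]]; [exists r | exists (init_state A), r].
Qed.

Lemma config_reachable s : C s -> reachable_state A s.
Proof. by case/config_run=> r run; exists w, r. Qed.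

(* By unambiguity, distinct states of C accept disjoint languages. *)
Lemma config_unambiguous s1 s2 z : C s1 -> C s2 ->
  accepts_from A s1 z -> accepts_from A s2 z -> s1 = s2.
Proof.
case/config_run=> r1 [run1 <-] /config_run [r2 [run2 <-]].
move=> [p1 [run_p1 acc1]] [p2 [run_p2 acc2]].
have acc_r1 : accepting_run A (init_state A) (w ++ z) (r1 ++ p1).
  by split; [exact: run_cat | rewrite last_cat].
have acc_r2 : accepting_run A (init_state A) (w ++ z) (r2 ++ p2).
  by split; [exact: run_cat | rewrite last_cat].
have /(f_equal (take (size w))) := unambA acc_r1 acc_r2.
by rewrite !take_size_cat ?(run_size run1) ?(run_size run2) // => ->.
Qed.

(* By universality, every word is accepted from some state of C. *)
Lemma config_universal z : exists t, C t /\ accepts_from A t z.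
Proof.
have [r [/run_split [run1 run2] acc]] := universalA (w ++ z).
exists (last (init_state A) (take (size w) r)); split.
  by apply/config_run; exists (take (size w) r).
by exists (drop (size w) r); split; rewrite // -last_cat cat_take_drop.
Qed.

(* Values stored in states of C are data of w, hence at most their sum. *)
Definition data_bound : nat := sumn (map snd w).

Lemma config_bounded s : C s -> bounded data_bound s.2.
Proof.
case/config_run=> r [run <-]; apply: run_bounded wfA _ _ run => [r0 x|].
  by rewrite ffunE.
rewrite /data_bound; elim: w => [|a w' IH] //=.
rewrite leq_addr; apply: sub_all IH => b /= bB; exact: leq_trans bB (leq_addl _ _).
Qed.

Lemma config_inj s : C s -> inj_val s.2.
Proof.
move/config_reachable/cleanA => [_ clean_s] i j d si sj.
by case: (eqVneq i j) => // /clean_s /(_ si sj).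
Qed.

(* Shift the data of a word accepted from l(u1) away from those u1 keeps on
   Q; the state t of C accepting the shifted word is the target, because a
   renaming realigning l(u1) with l(uj) and fixing t shows that both accept
   a common word whenever uj does not clash with t. *)
Lemma config_targets (l : L) : has_targets (fun u => C (l, u)).
Proof.
move=> Q u1 C1 def1.
have [[v acc_v] _] := cleanA (config_reachable C1).
have shift_inj := shift_off_inj (Q := Q) (config_bounded C1).
have [[l' tv] [Ct acc_t]] := config_universal (ren_word (shift_off data_bound Q u1) v).
exists tv => uj Cj agreeQ defj.
case: (boolP [exists r, exists r', (r \notin Q) && (uj r == tv r')]).
  by case/existsP=> r /existsP [r' /andP [Nr /eqP E]]; right; exists r, r'.
move=> clash_free; left.
have no_clash r r' : r \notin Q -> uj r != tv r'.
  move=> Nr; apply/eqP => E; move/negP: clash_free; apply.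
  by apply/existsP; exists r; apply/existsP; exists r'; rewrite Nr E eqxx.
have [h [h_inj E1 E2]] := realign (config_inj C1) (config_inj Cj) (config_bounded C1)
  (config_bounded Cj) (config_bounded Ct) agreeQ def1 defj no_clash.
have acc_j := accepts_ren h_inj (accepts_ren shift_inj acc_v).
have acc_t' := accepts_ren h_inj acc_t.
rewrite /ren_state /= E1 in acc_j; rewrite /ren_state /= E2 in acc_t'.
by case: (config_unambiguous Ct Cj acc_t' acc_j).
Qed.

End ReachableConfiguration.

Lemma three_le_exp4 n : 3 * n <= 4 ^ n.
Proof.
elim: n => [|n IH] //; rewrite expnS.
have : 0 < 4 ^ n by rewrite expn_gt0.
lia.
Qed.

Lemma base_le k : 1 <= k -> k * k + k + 1 <= k * 4 ^ k * k`!.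
Proof.
move=> k_pos; apply: (@leq_trans (k * (3 * k))); first nia.
apply: leq_trans (leq_mul (leqnn k) (three_le_exp4 k)) _.
by rewrite leq_pmulr ?fact_gt0.
Qed.

Theorem lemma1 :
  forall (k : nat) (Sigma L : finType) (A : RA k Sigma L),
    1 <= k ->
    URA A -> clean A -> universal A ->
    forall C : config k L, reachable_config A C ->
    forall (l : L) (S : seq (state k L)),
      uniq S -> (forall s, s \in S -> C s /\ s.1 = l) ->
      size S <= (k * 4 ^ k * k`!) ^ k.
Proof.
move=> k Sigma L A k_pos [wfA unambA] cleanA universalA C [w C_def] l S uniqS inS.
have uniqX : uniq (map snd S).
  by rewrite map_inj_in_uniq // => -[l1 u1] [l2 u2] /inS [_ /= ->] /inS [_ /= ->] /= ->.
have XC u : u \in map snd S -> C (l, u).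
  by case/mapP=> -[l' u'] /inS [Cs /= <-] ->.
have targets := @config_targets _ _ _ _ wfA unambA cleanA universalA _ _ C_def l.
rewrite -(size_map snd); apply: leq_trans (targets_bound targets uniqX XC) _.
by rewrite leq_exp2r // base_le.
Qed.
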